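(* Let $T\subset\mathbb{R}^d$ ($d\in\{2,3\}$) be a nondegenerate simplex. The set $\{S^i:i\in\mathcal{V}\}$ (if $d=2$), resp. $\{S^i_q:i\in\mathcal{V},\ q=0,1\}$ (if $d=3$), is a basis of $\mathbb{D}$. Moreover, for $i\neq j$, $i,j\in\mathcal{V}$, the normal-tangential components on the facet $F_j$ vanish: $(S^i)_{nt}|_{F_j}=0$ and $(S^i_q)_{nt}|_{F_j}=0$, while on $F_i$ these normal-tangential components do not vanish. When $d=3$ and $i\in\mathcal{V}$, $$t_{i+2,i+3}^T S^i_0 n_i=0,\quad t_{i+1,i+2}^T S^i_0 n_i\neq0,\quad t_{i+3,i+1}^T S^i_0 n_i\neq 0,$$ $$t_{i+2,i+3}^T S^i_1 n_i\neq0,\quad t_{i+1,i+2}^T S^i_1 n_i\neq0,\quad t_{i+3,i+1}^T S^i_1 n_i=0.$$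
   Context: $\mathcal{V}=\{0,1,2\}$ if $d=2$ and $\{0,1,2,3\}$ if $d=3$; $V_i$ ($i\in\mathcal{V}$) are the vertices of $T$, $F_i$ the facet opposite $V_i$, $n_i$ its outward unit normal, $t_{ij}=(V_i-V_j)/|V_i-V_j|$, and $\lambda_i$ the barycentric coordinate equal to $1$ at $V_i$. $\mathbb{D}=\{M\in\mathbb{R}^{d\times d}:\operatorname{tr}M=0\}$, $\operatorname{dev}\tau=\tau-\frac{\operatorname{tr}\tau}{d}I$, $a\otimes b=ab^T$. For $d=2$: $S^i=\operatorname{dev}(\nabla\lambda_{i+1}\otimes\operatorname{curl}\lambda_{i+2})$ with $\operatorname{curl}\phi=(-\partial_2\phi,\partial_1\phi)^T$ and indices mod 3. For $d=3$: $S^i_0=\operatorname{dev}(\nabla\lambda_{i+1}\otimes(\nabla\lambda_{i+2}\times\nabla\lambda_{i+3}))$, $S^i_1=\operatorname{dev}(\nabla\lambda_{i+2}\otimes(\nabla\lambda_{i+3}\times\nabla\lambda_{i+1}))$, indices mod 4 (also for the tangents $t$). For a matrix $\tau$ and a facet with unit normal $n$: $\tau_{nn}=n^T\tau n$, $\tau_{nt}=\tau n-\tau_{nn}n$. *)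

From HB Require Import structures.
From mathcomp Require Import all_boot all_order all_algebra.
Set Implicit Arguments. Unset Strict Implicit. Unset Printing Implicit Defensive.
Import Order.TTheory GRing.Theory Num.Theory.
Local Open Scope ring_scope.

Section Defs.
Variable R : rcfType.

Definition dotv d (a b : 'cV[R]_d) : R := (a^T *m b) 0 0.
Definition normv d (a : 'cV[R]_d) : R := Num.sqrt (dotv a a).

Definition tens d (a b : 'cV[R]_d) : 'M[R]_d := a *m b^T.

Definition devm d (tau : 'M[R]_d) : 'M[R]_d := tau - (\tr tau / d%:R) *: 1%:M.

Definition sh n (i : 'I_n.+1) (k : nat) : 'I_n.+1 := inZp (i + k).

Definition vmx d (V : 'I_d.+1 -> 'cV[R]_d) : 'M[R]_d.+1 :=
  \matrix_(j < d.+1) (row_mx (1 : 'rV[R]_1) (V j)^T).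

Definition nondeg_simplex d (V : 'I_d.+1 -> 'cV[R]_d) : Prop := \det (vmx V) != 0.

(* Barycentric coordinates: lambda(x) is the unique row vector with
   sum_j lambda_j = 1 and sum_j lambda_j V_j = x, i.e. [1, x^T] = lambda * vmx V. *)
Definition bary d (V : 'I_d.+1 -> 'cV[R]_d) (i : 'I_d.+1) (x : 'cV[R]_d) : R :=
  (row_mx (1 : 'rV[R]_1) x^T *m invmx (vmx V)) 0 i.

(* Gradient of the affine function bary V i: its (constant) linear part. *)
Definition grad d (V : 'I_d.+1 -> 'cV[R]_d) (i : 'I_d.+1) : 'cV[R]_d :=
  \col_(k < d) invmx (vmx V) (rshift 1 k) i.

Definition curl2 (V : 'I_3 -> 'cV[R]_2) (i : 'I_3) : 'cV[R]_2 :=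
  let g := grad V i in \col_(k < 2) (if k == 0 :> nat then - g 1 0 else g 0 0).

Definition cross (a b : 'cV[R]_3) : 'cV[R]_3 :=
  \col_(k < 3)
    (if k == 0 :> nat then a 1 0 * b 2 0 - a 2 0 * b 1 0
     else if k == 1 :> nat then a 2 0 * b 0 0 - a 0 0 * b 2 0
     else a 0 0 * b 1 0 - a 1 0 * b 0 0).

Definition S2 (V : 'I_3 -> 'cV[R]_2) (i : 'I_3) : 'M[R]_2 :=
  devm (tens (grad V (sh i 1)) (curl2 V (sh i 2))).

(* S^i_0 and S^i_1 (d = 3) ; q = false is S_0, q = true is S_1 *)
Definition S3 (V : 'I_4 -> 'cV[R]_3) (i : 'I_4) (q : bool) : 'M[R]_3 :=
  if ~~ q then
    devm (tens (grad V (sh i 1)) (cross (grad V (sh i 2)) (grad V (sh i 3))))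
  else
    devm (tens (grad V (sh i 2)) (cross (grad V (sh i 3)) (grad V (sh i 1)))).

Definition outward_unit_normal d (V : 'I_d.+1 -> 'cV[R]_d) (i : 'I_d.+1)
  (n : 'cV[R]_d) : Prop :=
  [/\ normv n = 1,
      (forall j k, j != i -> k != i -> dotv n (V j - V k) = 0)
    & (forall j, j != i -> dotv n (V i - V j) < 0)].

Definition tang d (V : 'I_d.+1 -> 'cV[R]_d) (i j : 'I_d.+1) : 'cV[R]_d :=
  (normv (V i - V j))^-1 *: (V i - V j).

Definition comp_nn d (tau : 'M[R]_d) (n : 'cV[R]_d) : R := dotv n (tau *m n).
Definition comp_nt d (tau : 'M[R]_d) (n : 'cV[R]_d) : 'cV[R]_d :=
  tau *m n - comp_nn tau n *: n.

(* D = trace-free matrices; B is a basis of D (family indexed by a finType) *)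
Definition is_basis_of_dev d (I : finType) (B : I -> 'M[R]_d) : Prop :=
  [/\ (forall k, \tr (B k) = 0),
      (forall c : I -> R, \sum_k c k *: B k = 0 -> forall k, c k = 0)
    & (forall M : 'M[R]_d, \tr M = 0 -> exists c : I -> R, M = \sum_k c k *: B k)].

End Defs.

From HB Require Import structures.
From mathcomp Require Import all_boot all_order all_algebra ring.
Set Implicit Arguments. Unset Strict Implicit. Unset Printing Implicit Defensive.
Import Order.TTheory GRing.Theory Num.Theory.
Local Open Scope ring_scope.

(* The gradients of the barycentric coordinates are dual to the edges,
   grad l_k . (V_a - V_b) = [a = k] - [b = k], and the unit normal n_i is a
   nonzero multiple of grad l_i.  For S = dev (a (x) b) and a unit vector n,
   S_nt = (b . n) (a - (a . n) n): it vanishes when a is parallel to n or b is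
   orthogonal to n, which kills every component on a facet F_j with j <> i.
   On F_i, pairing with a tangent t gives t . S n_i = (b . n_i) (t . a), read off
   from the duality; b . n_i <> 0 because the product of the triple product of
   three gradients with that of the three edges issued from the fourth vertex
   is the Gram determinant of Kronecker deltas, i.e. 1 (a 2x2 version in the
   plane).  Taking nt components facet by facet (and, in 3D, two tangents that
   make the 2x2 pairing triangular) gives linear independence; d^2 - 1
   independent trace-free matrices together with the identity form a basis of
   all matrices, so they span the trace-free ones. *)

Section TracelessBasis.
Variables (R : numFieldType) (d : nat) (I : finType) (B : I -> 'M[R]_d.+1).
Hypothesis trB : forall k, \tr (B k) = 0.

Lemma mxtrace_scale1D_eq0 a (c : I -> R) :
  \tr (a *: 1%:M + \sum_k c k *: B k) = 0 -> a = 0.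
Proof.
have trBc : \tr (\sum_k c k *: B k) = 0.
  by rewrite raddf_sum big1 // => k _; rewrite /= mxtraceZ trB mulr0.
rewrite scalemx1 mxtraceD trBc addr0 mxtrace_scalar => /eqP.
by rewrite mulrn_eq0 /= => /eqP.
Qed.

Lemma traceless_free_span :
  #|I| = (d.+1 ^ 2).-1 ->
  (forall c : I -> R, \sum_k c k *: B k = 0 -> forall k, c k = 0) ->
  forall M, \tr M = 0 -> exists c : I -> R, M = \sum_k c k *: B k.
Proof.
move=> cardI freeB M trM.
pose X := [tuple of 1%:M :: [tuple B (enum_val i) | i < #|I|]].
have sumX (k : 'I_#|I|.+1 -> R) : \sum_i k i *: X`_i =
    k ord0 *: 1%:M + \sum_x k (lift ord0 (enum_rank x)) *: B x.
  rewrite big_ord_recl [in RHS](reindex (@enum_val I predT)) /=; last first.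
    by exists enum_rank => x _; [exact: enum_valK | exact: enum_rankK].
  by congr (_ + _); apply: eq_bigr => i _; rewrite enum_valK nth_mktuple.
have freeX : free X.
  apply/freeP => k; rewrite sumX => k0.
  have := congr1 mxtrace k0; rewrite mxtrace0 => /mxtrace_scale1D_eq0 k00.
  move: k0; rewrite k00 scale0r add0r => /freeB kB i.
  by case: (unliftP ord0 i) => [j ->|->] //; rewrite -(enum_valK j) kB.
have /coord_span : M \in <<X>>%VS.
  suff /span_basis-> : basis_of fullv X by exact: memvf.
  rewrite basisEfree freeX subvf dimvf /dim /= size_tuple cardI card_ord.
  by rewrite prednK ?expn_gt0.
rewrite sumX => defM; exists (fun x => coord X (lift ord0 (enum_rank x)) M).
move: trM; rewrite {1}defM => /mxtrace_scale1D_eq0 c0.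
by rewrite {1}defM c0 scale0r add0r.
Qed.
End TracelessBasis.

Lemma traceless_free_basis (R : rcfType) d (I : finType) (B : I -> 'M[R]_d.+1) :
  #|I| = (d.+1 ^ 2).-1 -> (forall k, \tr (B k) = 0) ->
  (forall c : I -> R, \sum_k c k *: B k = 0 -> forall k, c k = 0) ->
  is_basis_of_dev B.
Proof. by move=> cardI trB freeB; split=> //; exact: traceless_free_span. Qed.

Section Euclid.
Variable R : rcfType.
Implicit Types d : nat.

Fact dotv_is_linear d (a : 'cV[R]_d) : linear_for *%R (dotv a).
Proof. by move=> x b c; rewrite /dotv mulmxDr -scalemxAr !mxE. Qed.

HB.instance Definition _ d (a : 'cV[R]_d) :=
  GRing.isLinear.Build R 'cV[R]_d R *%R (dotv a) (dotv_is_linear a).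

Lemma dotvBr d (a b c : 'cV[R]_d) : dotv a (b - c) = dotv a b - dotv a c.
Proof. exact: linearB. Qed.

Lemma dotvZr d (a b : 'cV[R]_d) x : dotv a (x *: b) = x * dotv a b.
Proof. exact: linearZ. Qed.

Lemma dotvC d (a b : 'cV[R]_d) : dotv a b = dotv b a.
Proof. by rewrite /dotv -[a^T *m b]trmxK trmx_mul trmxK mxE. Qed.

Lemma dotvE d (a b : 'cV[R]_d) : dotv a b = \sum_k a k 0 * b k 0.
Proof. by rewrite /dotv mxE; apply: eq_bigr => k _; rewrite mxE. Qed.

Lemma dotv_ge0 d (a : 'cV[R]_d) : 0 <= dotv a a.
Proof. by rewrite dotvE sumr_ge0 // => k _; rewrite -expr2 sqr_ge0. Qed.

Lemma dotv_eq0 d (a : 'cV[R]_d) : (dotv a a == 0) = (a == 0).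
Proof.
apply/eqP/eqP => [|->]; last by rewrite linear0.
rewrite dotvE => /psumr_eq0P a0; apply/matrixP => k l; rewrite (ord1 l) mxE.
by apply/eqP; rewrite -sqrf_eq0 expr2 a0 // => ? _; rewrite -expr2 sqr_ge0.
Qed.

Lemma normv_eq0 d (a : 'cV[R]_d) : (normv a == 0) = (a == 0).
Proof. by rewrite sqrtr_eq0 le_eqVlt ltNge dotv_ge0 orbF dotv_eq0. Qed.

Lemma dotv_normv1 d (a : 'cV[R]_d) : normv a = 1 -> dotv a a = 1.
Proof. by move=> a1; rewrite -(sqr_sqrtr (dotv_ge0 a)) -/(normv a) a1 expr1n. Qed.

Lemma tens_mulmx d (a b v : 'cV[R]_d) : tens a b *m v = dotv b v *: a.
Proof. by rewrite /tens -mulmxA [b^T *m v]mx11_scalar mul_mx_scalar. Qed.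

Lemma devm_mulmx d (X : 'M[R]_d) (v : 'cV[R]_d) :
  devm X *m v = X *m v - (\tr X / d%:R) *: v.
Proof. by rewrite /devm mulmxBl -scalemxAl mul1mx. Qed.

Lemma mxtrace_devm d (X : 'M[R]_d.+1) : \tr (devm X) = 0.
Proof.
by rewrite /devm mxtraceD raddfN /= mxtraceZ mxtrace1 divfK ?subrr // pnatr_eq0.
Qed.

Lemma comp_nt0 d (n : 'cV[R]_d) : comp_nt 0 n = 0.
Proof. by rewrite /comp_nt /comp_nn mul0mx linear0 scale0r subr0. Qed.

Lemma comp_nt_sum d (I : finType) (c : I -> R) (B : I -> 'M[R]_d) n :
  comp_nt (\sum_k c k *: B k) n = \sum_k c k *: comp_nt (B k) n.
Proof.
rewrite /comp_nt /comp_nn mulmx_suml linear_sum /= scaler_suml -sumrB.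
by apply: eq_bigr => k _; rewrite -scalemxAl dotvZr scalerBr scalerA.
Qed.

Lemma dotv_comp_nt d (X : 'M[R]_d) (n t : 'cV[R]_d) :
  dotv t n = 0 -> dotv t (comp_nt X n) = dotv t (X *m n).
Proof. by move=> tn; rewrite dotvBr dotvZr tn mulr0 subr0. Qed.

Lemma comp_nt_devm_tens d (a b n : 'cV[R]_d) : dotv n n = 1 ->
  comp_nt (devm (tens a b)) n = dotv b n *: (a - dotv a n *: n).
Proof.
move=> n1; rewrite /comp_nt /comp_nn devm_mulmx tens_mulmx.
rewrite dotvBr !dotvZr n1 mulr1 (dotvC n a).
by rewrite scalerBr scalerA scalerBl opprB addrA subrK.
Qed.

Lemma comp_nt_devm_tens_orth d (a b n : 'cV[R]_d) : dotv n n = 1 ->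
  dotv b n = 0 -> comp_nt (devm (tens a b)) n = 0.
Proof. by move=> n1 bn; rewrite comp_nt_devm_tens // bn scale0r. Qed.

Lemma comp_nt_devm_tens_par d (a b n : 'cV[R]_d) c : dotv n n = 1 ->
  n = c *: a -> comp_nt (devm (tens a b)) n = 0.
Proof.
move=> n1 nca; rewrite comp_nt_devm_tens // {3}nca scalerA mulrC (dotvC a n).
by rewrite -dotvZr -nca n1 scale1r subrr scaler0.
Qed.

Lemma dotv_devm_tens_mulmx d (a b n t : 'cV[R]_d) : dotv t n = 0 ->
  dotv t (devm (tens a b) *m n) = dotv b n * dotv t a.
Proof.
by move=> tn; rewrite devm_mulmx tens_mulmx dotvBr !dotvZr tn mulr0 subr0.
Qed.

Lemma comp_nt_diag_free d (I : finType) (B : I -> 'M[R]_d) (n : I -> 'cV[R]_d) :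
  (forall i j, i != j -> comp_nt (B i) (n j) = 0) ->
  (forall i, comp_nt (B i) (n i) != 0) ->
  forall c : I -> R, \sum_k c k *: B k = 0 -> forall k, c k = 0.
Proof.
move=> off diag c Bc0 j; apply/eqP.
have := congr1 (fun X => comp_nt X (n j)) Bc0.
rewrite /= comp_nt_sum comp_nt0 (bigD1 j) //= big1 ?addr0 => [|i ij]; last first.
  by rewrite off // scaler0.
by move/eqP; rewrite scaler_eq0 (negPf (diag j)) orbF.
Qed.

Lemma dotv_triangular_free d (u0 u1 t0 t1 : 'cV[R]_d) :
  dotv t0 u0 = 0 -> dotv t0 u1 != 0 -> dotv t1 u0 != 0 ->
  forall c0 c1, c0 *: u0 + c1 *: u1 = 0 -> c0 = 0 /\ c1 = 0.
Proof.
move=> t0u0 t0u1 t1u0 c0 c1 u0u1.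
have c1_0 : c1 = 0.
  move/(congr1 (dotv t0)): u0u1.
  rewrite linearD /= !dotvZr t0u0 mulr0 add0r linear0 => /eqP.
  by rewrite mulf_eq0 (negPf t0u1) orbF => /eqP.
split=> //; move/(congr1 (dotv t1)): u0u1.
rewrite c1_0 scale0r addr0 dotvZr linear0 => /eqP.
by rewrite mulf_eq0 (negPf t1u0) orbF => /eqP.
Qed.

Lemma comp_nt_pair_free d (I : finType) (B : I -> bool -> 'M[R]_d)
    (n : I -> 'cV[R]_d) :
  (forall i j q, i != j -> comp_nt (B i q) (n j) = 0) ->
  (forall j c0 c1, c0 *: comp_nt (B j false) (n j) +
                   c1 *: comp_nt (B j true) (n j) = 0 -> c0 = 0 /\ c1 = 0) ->
  forall c : I * bool -> R, \sum_k c k *: B k.1 k.2 = 0 -> forall k, c k = 0.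
Proof.
move=> off diag c Bc0 [j q].
have := congr1 (fun X => comp_nt X (n j)) Bc0; rewrite /= comp_nt_sum comp_nt0.
rewrite (eq_bigr (fun k => c (k.1, k.2) *: comp_nt (B k.1 k.2) (n j))) => [|[] //].
rewrite -(pair_big xpredT xpredT (fun i q => c (i, q) *: comp_nt (B i q) (n j))).
rewrite (bigD1 j) //= [X in _ + X]big1 ?addr0 => [|i ij]; last first.
  by apply: big1 => q' _; rewrite off // scaler0.
by rewrite big_bool /= addrC => /diag[c0 c1]; case: q.
Qed.

End Euclid.

Section Simplex.
Variables (R : rcfType) (d : nat) (V : 'I_d.+1 -> 'cV[R]_d).
Hypothesis nd : nondeg_simplex V.

Lemma vmx_unit : vmx V \in unitmx.
Proof. by rewrite unitmxE unitfE. Qed.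

Lemma vmx_ord0 a : vmx V a ord0 = 1.
Proof.
rewrite mxE (_ : ord0 = lshift d (ord0 : 'I_1)) ?row_mxEl ?mxE //.
exact: val_inj.
Qed.

Lemma vmx_lift a k : vmx V a (lift ord0 k) = V a k 0.
Proof.
rewrite mxE (_ : lift ord0 k = rshift 1 k) ?row_mxEr ?mxE //.
exact: val_inj.
Qed.

Lemma grad_vertex a k :
  invmx (vmx V) ord0 k + dotv (grad V k) (V a) = (a == k)%:R.
Proof.
have := congr1 (fun M : 'M[R]_d.+1 => M a k) (mulmxV vmx_unit).
rewrite /= !mxE big_ord_recl vmx_ord0 mul1r => <-; congr (_ + _).
rewrite dotvE; apply: eq_bigr => c _; rewrite vmx_lift mxE mulrC.
by congr (_ * invmx _ _ _); apply: val_inj.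
Qed.

Lemma grad_edge k a b :
  dotv (grad V k) (V a - V b) = (a == k)%:R - (b == k)%:R.
Proof. by rewrite dotvBr -!grad_vertex opprD addrACA subrr add0r. Qed.

Lemma edge_neq0 a b : a != b -> V a - V b != 0.
Proof.
move=> ab; apply/eqP => ab0; have := grad_edge a a b.
by rewrite ab0 linear0 eqxx eq_sym (negPf ab) subr0 => /esym/eqP; rewrite oner_eq0.
Qed.

Lemma edges_orth_eq0 i (w : 'cV[R]_d) :
  (forall a, dotv w (V a - V i) = 0) -> w = 0.
Proof.
move=> wV.
(* [vmx V *m u] is the column of the [dotv w (V a - V i)]. *)
pose u : 'cV[R]_d.+1 :=
  \col_c (if unlift ord0 c is Some c' then w c' 0 else - dotv w (V i)).
have Vu0 : vmx V *m u = 0.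
  apply/matrixP => a l; rewrite (ord1 l) !mxE big_ord_recl vmx_ord0 mxE unlift_none.
  rewrite -[RHS](wV a) dotvBr addrC mul1r (dotvC w); congr (_ + _).
  by rewrite dotvE; apply: eq_bigr => c _; rewrite vmx_lift mxE liftK mulrC.
have u0 : u = 0 by rewrite -(mulKmx vmx_unit u) Vu0 mulmx0.
apply/matrixP => c l; rewrite (ord1 l).
by have := congr1 (fun M : 'cV[R]_d.+1 => M (lift ord0 c) 0) u0; rewrite !mxE liftK.
Qed.

Lemma outward_normal_dotv1 i n : outward_unit_normal V i n -> dotv n n = 1.
Proof. by case=> /dotv_normv1. Qed.

Lemma dotv_tang_normal i n x y : outward_unit_normal V i n ->
  x != i -> y != i -> dotv (tang V x y) n = 0.
Proof. by case=> _ nF _ xi yi; rewrite dotvC /tang dotvZr nF ?mulr0. Qed.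

Lemma dotv_tang_devm_tens_grad {k b} i n x y : outward_unit_normal V i n ->
  x != i -> y != i ->
  dotv (tang V x y) (devm (tens (grad V k) b) *m n) =
  dotv b n * ((normv (V x - V y))^-1 * ((x == k)%:R - (y == k)%:R)).
Proof.
move=> ni xi yi; rewrite dotv_devm_tens_mulmx ?(dotv_tang_normal ni) //.
by rewrite /tang [dotv (_ *: _) _]dotvC dotvZr grad_edge.
Qed.

Lemma inv_normv_edge_neq0 x y : x != y -> (normv (V x - V y))^-1 != 0.
Proof. by move=> xy; rewrite invr_eq0 normv_eq0 edge_neq0. Qed.

End Simplex.

Lemma outward_normal_grad (R : rcfType) d (V : 'I_d.+2 -> 'cV[R]_d.+1) i n :
  nondeg_simplex V -> outward_unit_normal V i n ->
  exists2 c, c != 0 & n = c *: grad V i.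
Proof.
move=> nd [n1 nF _]; set a0 := lift i ord0.
have a0i : a0 != i by rewrite eq_sym neq_lift.
set m := dotv n (V a0 - V i).
have nm0 : n + m *: grad V i = 0.
  apply: (edges_orth_eq0 nd (i := i)) => a.
  rewrite dotvC linearD /= dotvZr ![dotv (V a - V i) _]dotvC (grad_edge nd) eqxx.
  have [->|ai] := eqVneq a i; first by rewrite !subrr linear0 mulr0 addr0.
  have -> : V a - V i = (V a - V a0) + (V a0 - V i) by rewrite subrKA.
  by rewrite sub0r mulrN1 linearD /= nF // add0r subrr.
exists (- m); last by apply/eqP; rewrite scaleNr -addr_eq0 nm0.
rewrite oppr_eq0; apply: contra_eq_neq (dotv_normv1 n1) => m0.
by move: nm0; rewrite m0 scale0r addr0 => ->; rewrite linear0 eq_sym oner_eq0.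
Qed.

Lemma sh0 n (i : 'I_n.+1) : sh i 0 = i.
Proof. by apply: val_inj; rewrite /= addn0 modn_small. Qed.

Lemma sh_eq n (i : 'I_n.+1) a b :
  (a <= n)%N -> (b <= n)%N -> (sh i a == sh i b) = (a == b).
Proof. by move=> an bn; rewrite -val_eqE /= eqn_modDl !modn_small. Qed.

Lemma sh_eq_id n (i : 'I_n.+1) a : (a <= n)%N -> (sh i a == i) = (a == 0%N).
Proof. by move=> an; rewrite -{2}(sh0 i) sh_eq. Qed.

Lemma sh3_cases (i j : 'I_3) : j != i -> (j == sh i 1) || (j == sh i 2).
Proof. by case: i j => [[|[|[|?]]] ?] [[|[|[|?]]] ?]. Qed.

Lemma sh4_cases (i j : 'I_4) :
  j != i -> [|| j == sh i 1, j == sh i 2 | j == sh i 3].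
Proof. by case: i j => [[|[|[|[|?]]]] ?] [[|[|[|[|?]]]] ?]. Qed.

Section LowDimensional.
Variable R : rcfType.

Lemma dotv2E (a b : 'cV[R]_2) : dotv a b = a 0 0 * b 0 0 + a 1 0 * b 1 0.
Proof.
rewrite dotvE !big_ord_recl big_ord0 addr0.
by congr (_ * _ + _ * _); congr (_ _ 0); apply: val_inj.
Qed.

Lemma dotv3E (a b : 'cV[R]_3) :
  dotv a b = a 0 0 * b 0 0 + a 1 0 * b 1 0 + a 2 0 * b 2 0.
Proof.
rewrite dotvE !big_ord_recl big_ord0 addr0 addrA.
by congr (_ * _ + _ * _ + _ * _); congr (_ _ 0); apply: val_inj.
Qed.

Lemma dotv_curl2_grad (V : 'I_3 -> 'cV[R]_2) k :
  dotv (curl2 V k) (grad V k) = 0.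
Proof. by rewrite /curl2; move: (grad V k) => p; rewrite dotv2E !mxE /=; ring. Qed.

Lemma dotv_curl2_gram (V : 'I_3 -> 'cV[R]_2) k (q e f : 'cV[R]_2) :
  dotv (curl2 V k) q * (e 0 0 * f 1 0 - e 1 0 * f 0 0) =
  dotv (grad V k) e * dotv q f - dotv (grad V k) f * dotv q e.
Proof.
by rewrite /curl2; move: (grad V k) => p; rewrite !dotv2E !mxE /=; ring.
Qed.

Lemma dotv_cross_l (b c : 'cV[R]_3) : dotv (cross b c) b = 0.
Proof. by rewrite dotv3E !mxE /=; ring. Qed.

Lemma dotv_cross_r (b c : 'cV[R]_3) : dotv (cross b c) c = 0.
Proof. by rewrite dotv3E !mxE /=; ring. Qed.

Lemma dotv_cross_gram (a b c e f h : 'cV[R]_3) :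
  dotv (cross b c) a * dotv (cross e f) h =
    dotv a e * (dotv b f * dotv c h - dotv b h * dotv c f)
  - dotv a f * (dotv b e * dotv c h - dotv b h * dotv c e)
  + dotv a h * (dotv b e * dotv c f - dotv b f * dotv c e).
Proof. by rewrite !dotv3E !mxE /=; ring. Qed.

Lemma curl2_grad_neq0 (V : 'I_3 -> 'cV[R]_2) a b x :
  nondeg_simplex V -> uniq [:: x; a; b] ->
  dotv (curl2 V b) (grad V a) != 0.
Proof.
rewrite /= !inE negb_or andbT => nd /andP[/andP[xa xb] ab].
have ba : b != a by rewrite eq_sym.
apply/eqP => ba0; have := dotv_curl2_gram V b (grad V a) (V b - V x) (V a - V x).
rewrite ba0 mul0r !(grad_edge nd) !eqxx !(negPf xa, negPf xb, negPf ab, negPf ba).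
by move/eqP; rewrite !subr0 mul0r subr0 mulr1 eq_sym oner_eq0.
Qed.

Lemma cross_grad_neq0 (V : 'I_4 -> 'cV[R]_3) a b c x :
  nondeg_simplex V -> uniq [:: x; a; b; c] ->
  dotv (cross (grad V b) (grad V c)) (grad V a) != 0.
Proof.
rewrite /= !inE !negb_or andbT => nd /and3P[/and3P[xa xb xc] /andP[ab ac] bc].
have [ba ca cb] : [/\ b != a, c != a & c != b] by rewrite !(eq_sym c) eq_sym.
apply/eqP => abc0; have := dotv_cross_gram (grad V a) (grad V b) (grad V c)
  (V a - V x) (V b - V x) (V c - V x).
rewrite abc0 mul0r !(grad_edge nd) !eqxx.
rewrite !(negPf xa, negPf xb, negPf xc, negPf ab, negPf ac, negPf bc,
          negPf ba, negPf ca, negPf cb).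
by move/eqP; rewrite !subr0 !mul0r !subr0 !mulr1 addr0 eq_sym oner_eq0.
Qed.

End LowDimensional.

Section Triangle.
Variables (R : rcfType) (V : 'I_3 -> 'cV[R]_2) (n : 'I_3 -> 'cV[R]_2).
Hypotheses (nd : nondeg_simplex V) (hn : forall i, outward_unit_normal V i (n i)).

Lemma comp_nt_S2_off i j : i != j -> comp_nt (S2 V i) (n j) = 0.
Proof.
rewrite eq_sym => ji; have [c _ nj] := outward_normal_grad nd (hn j).
case/orP: (sh3_cases ji) => /eqP Ej; subst j.
  exact: comp_nt_devm_tens_par (outward_normal_dotv1 (hn _)) nj.
rewrite comp_nt_devm_tens_orth ?(outward_normal_dotv1 (hn _)) //.
by rewrite nj dotvZr dotv_curl2_grad mulr0.
Qed.

Lemma dotv_tang_S2_neq0 i :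
  dotv (tang V (sh i 1) (sh i 2)) (S2 V i *m n i) != 0.
Proof.
have [c c0 ni] := outward_normal_grad nd (hn i).
rewrite (dotv_tang_devm_tens_grad nd (hn i)) ?sh_eq_id // eqxx sh_eq //=.
rewrite subr0 mulr1 mulf_neq0 ?inv_normv_edge_neq0 ?sh_eq //.
rewrite ni dotvZr mulf_neq0 // (curl2_grad_neq0 (x := sh i 1)) //.
by case: i {c0 ni} => [[|[|[|?]]] ?].
Qed.

Lemma comp_nt_S2_neq0 i : comp_nt (S2 V i) (n i) != 0.
Proof.
apply: contraNneq (dotv_tang_S2_neq0 i) => S0.
by rewrite -dotv_comp_nt ?S0 ?linear0 // (dotv_tang_normal (hn i)) ?sh_eq_id.
Qed.

Lemma triangle_S2 :
  [/\ is_basis_of_dev (S2 V),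
      (forall i j, i != j -> comp_nt (S2 V i) (n j) = 0)
    & (forall i, comp_nt (S2 V i) (n i) != 0)].
Proof.
split; [apply: traceless_free_basis | exact: comp_nt_S2_off
        | exact: comp_nt_S2_neq0].
- by rewrite card_ord.
- by move=> k; exact: mxtrace_devm.
- exact: comp_nt_diag_free comp_nt_S2_off comp_nt_S2_neq0.
Qed.

End Triangle.

Section Tetrahedron.
Variables (R : rcfType) (V : 'I_4 -> 'cV[R]_3) (n : 'I_4 -> 'cV[R]_3).
Hypotheses (nd : nondeg_simplex V) (hn : forall i, outward_unit_normal V i (n i)).

Lemma comp_nt_S3_off i j q : i != j -> comp_nt (S3 V i q) (n j) = 0.
Proof.
rewrite eq_sym => ji; have [c _ nj] := outward_normal_grad nd (hn j).
have nj1 := outward_normal_dotv1 (hn j).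
rewrite /S3; case/or3P: (sh4_cases ji) => /eqP Ej; subst j; case: q => /=.
- by rewrite comp_nt_devm_tens_orth // nj dotvZr dotv_cross_r mulr0.
- exact: comp_nt_devm_tens_par nj1 nj.
- exact: comp_nt_devm_tens_par nj1 nj.
- by rewrite comp_nt_devm_tens_orth // nj dotvZr dotv_cross_l mulr0.
- by rewrite comp_nt_devm_tens_orth // nj dotvZr dotv_cross_l mulr0.
- by rewrite comp_nt_devm_tens_orth // nj dotvZr dotv_cross_r mulr0.
Qed.

Lemma S3_tangential i :
  [/\ dotv (tang V (sh i 2) (sh i 3)) (S3 V i false *m n i) = 0,
      dotv (tang V (sh i 1) (sh i 2)) (S3 V i false *m n i) != 0
    & dotv (tang V (sh i 3) (sh i 1)) (S3 V i false *m n i) != 0] /\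
  [/\ dotv (tang V (sh i 2) (sh i 3)) (S3 V i true *m n i) != 0,
      dotv (tang V (sh i 1) (sh i 2)) (S3 V i true *m n i) != 0
    & dotv (tang V (sh i 3) (sh i 1)) (S3 V i true *m n i) = 0].
Proof.
have [c c0 ni] := outward_normal_grad nd (hn i).
have cross_n_neq0 a b x : uniq [:: x; i; a; b] ->
    dotv (cross (grad V a) (grad V b)) (n i) != 0.
  by move=> uxiab; rewrite ni dotvZr mulf_neq0 // (cross_grad_neq0 nd uxiab).
have /cross_n_neq0 b0 : uniq [:: sh i 1; i; sh i 2; sh i 3].
  by case: i {c0 ni cross_n_neq0} => [[|[|[|[|?]]]] ?].
have /cross_n_neq0 b1 : uniq [:: sh i 2; i; sh i 3; sh i 1].
  by case: i {c0 ni cross_n_neq0 b0} => [[|[|[|[|?]]]] ?].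
(* Abstracting the cross products keeps the rewrites below from trying to
   unify them with [tang], which is very slow. *)
move: b0 b1; rewrite /S3 /=.
move: (cross _ (grad V (sh i 3))) (cross _ (grad V (sh i 1))) => u0 u1 u0n u1n.
rewrite !(dotv_tang_devm_tens_grad nd (hn i)) ?sh_eq_id // !eqxx !sh_eq //=.
rewrite !subrr !mulr0 !subr0 !sub0r !mulr1 !mulrN1 !mulrN !oppr_eq0.
by do 2!split; rewrite // mulf_neq0 // inv_normv_edge_neq0 // sh_eq.
Qed.

Lemma comp_nt_S3_neq0 i q : comp_nt (S3 V i q) (n i) != 0.
Proof.
have t12_n : dotv (tang V (sh i 1) (sh i 2)) (n i) = 0.
  by rewrite (dotv_tang_normal (hn i)) ?sh_eq_id.
have [[_ t12_S0 _] [_ t12_S1 _]] := S3_tangential i.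
by case: q; [move: t12_S1 | move: t12_S0];
  apply: contraNneq => S0; rewrite -dotv_comp_nt // S0 linear0.
Qed.

Lemma comp_nt_S3_pair_free j c0 c1 :
  c0 *: comp_nt (S3 V j false) (n j) + c1 *: comp_nt (S3 V j true) (n j) = 0 ->
  c0 = 0 /\ c1 = 0.
Proof.
have [[t23_S0 t12_S0 _] [t23_S1 _ _]] := S3_tangential j.
apply: (dotv_triangular_free (t0 := tang V (sh j 2) (sh j 3))
                             (t1 := tang V (sh j 1) (sh j 2)));
  by rewrite dotv_comp_nt ?(dotv_tang_normal (hn j)) ?sh_eq_id.
Qed.

Lemma tetrahedron_S3 :
  [/\ is_basis_of_dev (fun p : 'I_4 * bool => S3 V p.1 p.2),
      (forall i j q, i != j -> comp_nt (S3 V i q) (n j) = 0),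
      (forall i q, comp_nt (S3 V i q) (n i) != 0)
    & (forall i,
        [/\ dotv (tang V (sh i 2) (sh i 3)) (S3 V i false *m n i) = 0,
             dotv (tang V (sh i 1) (sh i 2)) (S3 V i false *m n i) != 0
           & dotv (tang V (sh i 3) (sh i 1)) (S3 V i false *m n i) != 0] /\
        [/\ dotv (tang V (sh i 2) (sh i 3)) (S3 V i true *m n i) != 0,
             dotv (tang V (sh i 1) (sh i 2)) (S3 V i true *m n i) != 0
           & dotv (tang V (sh i 3) (sh i 1)) (S3 V i true *m n i) = 0])].
Proof.
split; [apply: traceless_free_basis | exact: comp_nt_S3_off
        | exact: comp_nt_S3_neq0 | exact: S3_tangential].
- by rewrite card_prod card_ord card_bool.
- by move=> k; rewrite /S3; case: ifP => _; exact: mxtrace_devm.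
- exact: comp_nt_pair_free comp_nt_S3_off comp_nt_S3_pair_free.
Qed.

End Tetrahedron.

Theorem lemma5p1 (R : rcfType) :
  (* d = 2 *)
  (forall (V : 'I_3 -> 'cV[R]_2) (n : 'I_3 -> 'cV[R]_2),
     nondeg_simplex V -> (forall i, outward_unit_normal V i (n i)) ->
     [/\ is_basis_of_dev (S2 V),
         (forall i j, i != j -> comp_nt (S2 V i) (n j) = 0)
       & (forall i, comp_nt (S2 V i) (n i) != 0)]) /\
  (* d = 3 *)
  (forall (V : 'I_4 -> 'cV[R]_3) (n : 'I_4 -> 'cV[R]_3),
     nondeg_simplex V -> (forall i, outward_unit_normal V i (n i)) ->
     [/\ is_basis_of_dev (fun p : 'I_4 * bool => S3 V p.1 p.2),
         (forall i j q, i != j -> comp_nt (S3 V i q) (n j) = 0),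
         (forall i q, comp_nt (S3 V i q) (n i) != 0)
       & (forall i,
           [/\ dotv (tang V (sh i 2) (sh i 3)) (S3 V i false *m n i) = 0,
                dotv (tang V (sh i 1) (sh i 2)) (S3 V i false *m n i) != 0
              & dotv (tang V (sh i 3) (sh i 1)) (S3 V i false *m n i) != 0] /\
           [/\ dotv (tang V (sh i 2) (sh i 3)) (S3 V i true *m n i) != 0,
                dotv (tang V (sh i 1) (sh i 2)) (S3 V i true *m n i) != 0
              & dotv (tang V (sh i 3) (sh i 1)) (S3 V i true *m n i) = 0])]).
Proof. by split=> V n; [exact: triangle_S2 | exact: tetrahedron_S3]. Qed.
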